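(* There exists a context-free language $L$ such that $L \leftarrow L$ is not context-free.
   Context: Outfix-guided insertion: $x \leftarrow y = \{ x_1 u z v x_2 \mid x = x_1 u v x_2,\ y = u z v,\ u \neq \varepsilon,\ v \neq \varepsilon \}$; for languages, $L_1 \leftarrow L_2 = \bigcup_{x \in L_1, y \in L_2} x \leftarrow y$. *)

From mathcomp Require Import all_boot.
From Stdlib Require Import Relations.
Set Implicit Arguments. Unset Strict Implicit. Unset Printing Implicit Defensive.

Definition language (T : Type) := seq T -> Prop.

Record cfg (T : finType) := CFG {
  nonterm : finType;
  start : nonterm;
  rules : seq (nonterm * seq (nonterm + T))
}.

Definition cfg_step (T : finType) (G : cfg T)
    (s1 s2 : seq (nonterm G + T)) : Prop :=
  exists (a b : seq (nonterm G + T)) (A : nonterm G) (rhs : seq (nonterm G + T)),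
    (A, rhs) \in rules G /\ s1 = a ++ inl A :: b /\ s2 = a ++ rhs ++ b.

Definition cfg_derives (T : finType) (G : cfg T) : relation (seq (nonterm G + T)) :=
  clos_refl_trans _ (@cfg_step T G).

Arguments cfg_derives {T} G.

Definition cfg_lang (T : finType) (G : cfg T) : language T :=
  fun w => cfg_derives G [:: inl (start G)] (map inr w).

Definition context_free (T : finType) (L : language T) : Prop :=
  exists G : cfg T, forall w, L w <-> cfg_lang G w.

(* Outfix-guided insertion of words:
   x <- y = { x1 u z v x2 | x = x1 u v x2, y = u z v, u <> eps, v <> eps }. *)
Definition ogi_word (T : Type) (x y : seq T) : language T :=
  fun w => exists x1 u z v x2 : seq T,
    [/\ x = x1 ++ u ++ v ++ x2, y = u ++ z ++ v, u <> [::], v <> [::]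
      & w = x1 ++ u ++ z ++ v ++ x2].

Definition ogi (T : Type) (L1 L2 : language T) : language T :=
  fun w => exists x y, [/\ L1 x, L2 y & ogi_word x y w].

From HB Require Import structures.
From mathcomp Require Import all_boot zify.
From Stdlib Require Import Relations.
Set Implicit Arguments. Unset Strict Implicit. Unset Printing Implicit Defensive.

(* The witness is L = { a^k h b^k d s } u { h b^k d c^k s }.  In x <- y the
   nonempty prefix u and suffix v of y must sit inside x, and the markers h, d,
   s (each occurring once) force every word of L <- L containing both a and c
   to be a^k h b^k d c^k s.  Pumping such a word with k large adds equally
   many a, b and c and no marker, which is impossible because each pumped
   factor lies inside a single block.  The (weak) pumping lemma is proved on
   parse trees: a yield longer than bound^#nonterminals forces a path on which
   some nonterminal repeats. *)

Section Words.

Variable U : eqType.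
Implicit Types (s t u v : seq U) (m : U).

Lemma nseqSr k m : nseq k.+1 m = nseq k m ++ [:: m].
Proof. by rewrite -addn1 nseqD. Qed.

Lemma cat_cons_marker m s1 t1 s2 t2 : m \notin s2 -> m \notin t2 ->
  s1 ++ m :: t1 = s2 ++ m :: t2 -> s1 = s2 /\ t1 = t2.
Proof.
elim: s1 s2 => [|x s1 IH] [|y s2] /= Hs2 Ht2 [].
- by [].
- by move=> Ey _; rewrite Ey inE eqxx in Hs2.
- by move=> _ Et; rewrite -Et mem_cat inE eqxx orbT in Ht2.
- by move: Hs2; rewrite inE negb_or => /andP [_ Hs2] -> /(IH _ Hs2 Ht2) [-> ->].
Qed.

Lemma prefix_cat_cons_notin m s t u : m \notin s -> prefix s (t ++ m :: u) -> prefix s t.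
Proof.
elim: t s => [|x t IH] [|y s] //=; first by rewrite inE negb_or eq_sym => /andP [/negPf ->].
by rewrite inE negb_or => /andP [_ /IH Hs] /andP [-> /Hs].
Qed.

Lemma infix_cat_cons_notin m s t u : m \notin s ->
  infix s (t ++ m :: u) -> infix s t || infix s u.
Proof.
move=> Hs; elim: t => [|x t IH]; rewrite ?cat0s ?cat_cons infix_consl.
  case/orP=> [/(prefix_cat_cons_notin (t := [::]) Hs) | ->]; last by rewrite orbT.
  by rewrite prefixs0 => /eqP ->.
case/orP=> [/(prefix_cat_cons_notin (t := x :: t) Hs) /prefixW -> // | /IH /orP [Ht | ->]].
  by rewrite infix_consl Ht orbT.
by rewrite orbT.
Qed.

Lemma infix_nseq_constant s k m : infix s (nseq k m) -> constant s.
Proof.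
move/mem_infix => sub; apply: (@all_pred1_constant _ m); apply/allP => x /sub.
by rewrite mem_nseq => /andP [].
Qed.

Lemma mem_ogi_word (x y w : seq U) m : ogi_word x y w -> m \in w -> (m \in x) || (m \in y).
Proof.
move=> [x1 [u [z [v [x2 [-> -> _ _ ->]]]]]]; rewrite !mem_cat.
by case: (m \in x1); case: (m \in u); case: (m \in z); case: (m \in v); case: (m \in x2).
Qed.

Lemma mem_pump u v x y z : {subset u ++ v ++ x ++ y ++ z <= u ++ v ++ v ++ x ++ y ++ y ++ z}.
Proof.
move=> m; rewrite !mem_cat.
by case: (m \in u); case: (m \in v); case: (m \in x); case: (m \in y); case: (m \in z).
Qed.

Lemma nseq_marker_eq (b c d : U) u z v i j : d != b -> d != c ->
  u ++ v = nseq i b ++ [:: d] -> u ++ z ++ v = nseq j b ++ d :: nseq j c -> i = j.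
Proof.
move=> db dc; case/lastP: v => [|v e].
  rewrite !cats0 => -> E.
  have [Eb _] : nseq i b = nseq j b /\ z = nseq j c.
    by apply: (@cat_cons_marker d); rewrite ?mem_nseq ?(negPf db) ?(negPf dc) ?andbF // -E -catA.
  by have := congr1 size Eb; rewrite !size_nseq.
rewrite -rcons_cat cats1 => /rcons_inj [Euv ->].
rewrite -!rcons_cat; case: j => [|j].
  move=> /(@rcons_inj _ _ [::] d d) [/nilP]; rewrite !cat_nilp => /and3P [/nilP Eu _ /nilP Ev].
  by move: Euv; rewrite Eu Ev => /(congr1 size); rewrite size_nseq.
move=> /(congr1 (last d)); rewrite last_rcons last_cat [nseq j.+1 c]nseqSr /= last_cat /=.
by move=> /eqP; rewrite (negPf dc).
Qed.

End Words.

Section ParseTrees.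

Variables (T : finType) (G : cfg T).

Local Notation form := (seq (nonterm G + T)).

(* [gen s w n]: a parse forest for the sentential form [s] with yield [w]
   using [n] rule applications. *)
Inductive gen : form -> seq T -> nat -> Prop :=
| gen_nil : gen [::] [::] 0
| gen_term t s w n : gen s w n -> gen (inr t :: s) (t :: w) n
| gen_nonterm A rhs s w1 w2 n1 n2 : (A, rhs) \in rules G ->
    gen rhs w1 n1 -> gen s w2 n2 -> gen (inl A :: s) (w1 ++ w2) (n1 + n2).+1.

Lemma gen_nilE w n : gen [::] w n -> w = [::] /\ n = 0.
Proof. by move Es: [::] => s H; case: H Es. Qed.

Lemma gen_termE t s w n : gen (inr t :: s) w n ->
  exists2 w', w = t :: w' & gen s w' n.
Proof.
by move Es: (inr t :: s) => s' H; case: H Es => // t' s'' w' n' H [-> ->]; exists w'.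
Qed.

Lemma gen_nontermE A s w n : gen (inl A :: s) w n ->
  exists rhs w1 w2 n1 n2, [/\ (A, rhs) \in rules G, gen rhs w1 n1, gen s w2 n2,
    w = w1 ++ w2 & n = (n1 + n2).+1].
Proof.
move Es: (inl A :: s) => s' H; case: H Es => // A' rhs s'' w1 w2 n1 n2 Hr H1 H2 [-> ->].
by exists rhs, w1, w2, n1, n2.
Qed.

Lemma gen_symE A w n : gen [:: inl A] w n ->
  exists rhs n', [/\ (A, rhs) \in rules G, gen rhs w n' & n = n'.+1].
Proof.
move=> /gen_nontermE [rhs [w1 [w2 [n1 [n2 [Hr H1 /gen_nilE [-> ->] -> ->]]]]]].
by exists rhs, n1; rewrite cats0 addn0.
Qed.

Lemma gen_cat s1 w1 n1 s2 w2 n2 :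
  gen s1 w1 n1 -> gen s2 w2 n2 -> gen (s1 ++ s2) (w1 ++ w2) (n1 + n2).
Proof.
elim=> [|t s w n _ IH|A rhs s w w' m m' Hr Hw _ _ IH] H2 //=.
  exact/gen_term/IH.
by rewrite -catA -addSn -addnA; apply: gen_nonterm Hr Hw (IH H2).
Qed.

Lemma gen_split s1 s2 w n : gen (s1 ++ s2) w n ->
  exists w1 w2 n1 n2, [/\ w = w1 ++ w2, n = n1 + n2, gen s1 w1 n1 & gen s2 w2 n2].
Proof.
elim: s1 w n => [|[A|t] s1 IH] w n /= H.
- by exists [::], w, 0, n; split=> //; apply: gen_nil.
- have [rhs [w1 [w2 [n1 [n2 [Hr H1 /IH [v1 [v2 [m1 [m2 [-> -> K1 K2]]]]] -> ->]]]]]] :=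
    gen_nontermE H.
  exists (w1 ++ v1), v2, (n1 + m1).+1, m2; split; [by rewrite catA | lia | | by []].
  exact: gen_nonterm Hr H1 K1.
- have [w' -> /IH [v1 [v2 [m1 [m2 [-> -> K1 K2]]]]]] := gen_termE H.
  by exists (t :: v1), v2, m1, m2; split=> //; apply: gen_term.
Qed.

Lemma gen_map_inr w : gen (map inr w) w 0.
Proof. by elim: w => [|t w IH]; [apply: gen_nil | apply: gen_term]. Qed.

Lemma derives_cat a b s1 s2 :
  cfg_derives G s1 s2 -> cfg_derives G (a ++ s1 ++ b) (a ++ s2 ++ b).
Proof.
elim=> [x y [a' [b' [A [rhs [Hr [-> ->]]]]]] | x | x y z _ IH1 _ IH2].
- by apply: rt_step; exists (a ++ a'), (b' ++ b), A, rhs; rewrite -!catA.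
- exact: rt_refl.
- exact: rt_trans IH1 IH2.
Qed.

Lemma gen_derives s w n : gen s w n -> cfg_derives G s (map inr w).
Proof.
elim=> [|t s' w' n' _ IH|A rhs s' w1 w2 n1 n2 Hr _ IH1 _ IH2].
- exact: rt_refl.
- by have := derives_cat [:: inr t] [::] IH; rewrite /= !cats0.
- apply: (@rt_trans _ _ _ (rhs ++ s')); first by apply: rt_step; exists [::], s', A, rhs.
  apply: rt_trans (derives_cat [::] s' IH1) _.
  by have := derives_cat (map inr w1) [::] IH2; rewrite !cats0 map_cat.
Qed.

Lemma derives_gen s w : cfg_derives G s (map inr w) -> exists n, gen s w n.
Proof.
move=> /clos_rt_rt1n_iff; move Ew: (map inr w) => s'' H.
elim: H w Ew => [x | x y z [a [b [A [rhs [Hr [-> ->]]]]]] _ IH] w0 Ew.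
  by exists 0; rewrite -Ew; apply: gen_map_inr.
have [n /gen_split [w1 [w23 [n1 [_ [-> _ H1 /gen_split [w2 [w3 [n2 [n3 [-> _ H2 H3]]]]]]]]]]] :=
  IH _ Ew.
by exists (n1 + (n2 + n3).+1); apply/(gen_cat H1)/(gen_nonterm Hr H2 H3).
Qed.

Lemma cfg_langE w : cfg_lang G w <-> exists n, gen [:: inl (start G)] w n.
Proof. by split=> [/derives_gen | [n /gen_derives]]. Qed.

(* A context [A =>* l C r] of [m] rule applications, presented by its action
   on parse trees of [C]. *)
Definition plugs (A C : nonterm G) (l r : seq T) (m : nat) : Prop :=
  forall x k, gen [:: inl C] x k -> gen [:: inl A] (l ++ x ++ r) (m + k).

Lemma plugs_refl C : plugs C C [::] [::] 0.
Proof. by move=> x k; rewrite cats0. Qed.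

Lemma plugs_trans A B C l1 r1 m1 l2 r2 m2 :
  plugs A B l1 r1 m1 -> plugs B C l2 r2 m2 -> plugs A C (l1 ++ l2) (r2 ++ r1) (m1 + m2).
Proof. by move=> H1 H2 x k /H2 /H1; rewrite -addnA -!catA. Qed.

Lemma plugs_rule A s1 D s2 l n1 r n2 : (A, s1 ++ inl D :: s2) \in rules G ->
  gen s1 l n1 -> gen s2 r n2 -> plugs A D l r (n1 + n2).+1.
Proof.
move=> HA Hl Hr x k Hx.
have -> : (n1 + n2).+1 + k = (n1 + (k + n2) + 0).+1 by lia.
by rewrite -[l ++ x ++ r]cats0; apply: gen_nonterm HA (gen_cat Hl (gen_cat Hx Hr)) gen_nil.
Qed.

Definition bound : nat := (sumn [seq size p.2 | p <- rules G]).+1.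

Lemma size_rhs_lt_bound A rhs : (A, rhs) \in rules G -> size rhs < bound.
Proof.
rewrite /bound ltnS; elim: (rules G) => //= p rs IH.
by rewrite inE => /predU1P [<- /= | /IH]; lia.
Qed.

Lemma gen_large_tree s w n M : gen s w n -> 0 < M -> size s * M < size w ->
  exists s1 D s2 l x r n1 nx n2,
    [/\ s = s1 ++ inl D :: s2, w = l ++ x ++ r, n = n1 + nx + n2 & M < size x] /\
    [/\ gen s1 l n1, gen [:: inl D] x nx & gen s2 r n2].
Proof.
move=> H HM; elim: H => [|t s' w' n' Hs IH|A rhs s' w1 w2 n1 n2 Hr H1 _ Hs IH] /=.
- by rewrite mul0n.
- rewrite mulSn => Hlt.
  have /IH [s1 [D [s2 [l [x [r [m1 [mx [m2 [[-> -> -> HX] [H1 Hx H2]]]]]]]]]]] :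
    size s' * M < size w' by lia.
  exists (inr t :: s1), D, s2, (t :: l), x, r, m1, mx, m2.
  by split; split=> //; apply: gen_term.
- rewrite mulSn size_cat => Hlt; have [HM1 | HM1] := ltnP M (size w1).
    exists [::], A, s', [::], w1, w2, 0, (n1 + 0).+1, n2.
    split; split=> //; [lia | exact: gen_nil |].
    by have := gen_nonterm Hr H1 gen_nil; rewrite cats0.
  have /IH [s1 [D [s2 [l [x [r [m1 [mx [m2 [[-> -> -> HX] [K1 Kx K2]]]]]]]]]]] :
    size s' * M < size w2 by lia.
  exists (inl A :: s1), D, s2, (w1 ++ l), x, r, (n1 + m1).+1, mx, m2.
  split; split=> //; [by rewrite catA | lia | exact: gen_nonterm Hr H1 K1].
Qed.

Lemma plugs_large_child A w n k : gen [:: inl A] w n -> bound ^ k.+1 < size w ->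
  exists D l x r m nx, [/\ plugs A D l r m.+1, gen [:: inl D] x nx,
    w = l ++ x ++ r, n = m.+1 + nx & bound ^ k < size x].
Proof.
move=> /gen_symE [rhs [n' [Hr Hw ->]]] Hsize.
have Hrhs : size rhs * bound ^ k < size w.
  rewrite expnS in Hsize; apply: leq_ltn_trans Hsize.
  exact: leq_mul (ltnW (size_rhs_lt_bound Hr)) (leqnn _).
have [s1 [D [s2 [l [x [r [n1 [nx [n2 [[Erhs -> -> Hx] [H1 HD H2]]]]]]]]]]] :=
  gen_large_tree Hw (expn_gt0 bound k) Hrhs.
rewrite Erhs in Hr; exists D, l, x, r, (n1 + n2), nx; split=> //; last lia.
exact: plugs_rule Hr H1 H2.
Qed.

Definition self_embedding (C : nonterm G) (x : seq T) (n : nat) : Prop :=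
  exists l x' r m n', [/\ plugs C C l r m, 0 < m, gen [:: inl C] x' n',
    x = l ++ x' ++ r & n = m + n'].

(* Descend along large subtrees, recording the nonterminals met in [V]: a
   path of length [#|[predC V]|] must revisit one of them. *)
Lemma plugs_repeat k (V : seq (nonterm G)) A w n :
  gen [:: inl A] w n -> #|[predC V]| <= k -> bound ^ k < size w ->
  exists C l x r m nx, [/\ plugs A C l r m, gen [:: inl C] x nx,
    w = l ++ x ++ r, n = m + nx & C \in V \/ self_embedding C x nx].
Proof.
elim: k V A w n => [|k IH] V A w n HA HV Hw; have [AV | AnV] := boolP (A \in V);
  try by exists A, [::], w, [::], 0, n; split=> //; [apply: plugs_refl | rewrite cats0 | left].
  by move: HV; rewrite leqn0 => /eqP/card0_eq/(_ A); rewrite inE AnV.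
have [D [l [x [r [m [nx [HAD HD Ew En Hx]]]]]]] := plugs_large_child HA Hw.
have HV' : #|[predC A :: V]| <= k.
  move: HV; rewrite (cardD1 A) inE AnV add1n ltnS; apply: leq_trans.
  by apply: subset_leq_card; apply/subsetP => y; rewrite !inE negb_or => /andP [-> ->].
have [C [l' [x' [r' [m' [nx' [HDC HC Ex Enx HCV]]]]]]] := IH _ _ _ _ HD HV' Hx.
have HAC := plugs_trans HAD HDC.
have Ew' : w = (l ++ l') ++ x' ++ r' ++ r by rewrite Ew Ex -!catA.
have En' : n = m.+1 + m' + nx' by lia.
have [EC | CnA] := eqVneq C A.
  exists A, [::], w, [::], 0, n; split; [exact: plugs_refl | by [] | by rewrite cats0 | by [] |].
  by subst C; right; exists (l ++ l'), x', (r' ++ r), (m.+1 + m'), nx'.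
exists C, (l ++ l'), x', (r' ++ r), (m.+1 + m'), nx'; split=> //.
by case: HCV => [|]; [rewrite inE (negPf CnA); left | right].
Qed.

Lemma cfg_lang_pump w : cfg_lang G w -> bound ^ #|nonterm G| < size w ->
  exists u v x y z, [/\ w = u ++ v ++ x ++ y ++ z, v ++ y != [::]
    & cfg_lang G (u ++ v ++ v ++ x ++ y ++ y ++ z)].
Proof.
move=> /cfg_langE [n]; elim/ltn_ind: n w => n IHn w Hw Hsize.
have [C [l [x [r [m [nx [HSC _ Ew En [//|]]]]]]]] :=
  plugs_repeat Hw (max_card [predC [::]]) Hsize.
move=> [l' [x' [r' [m' [nx' [HCC Hm' HC Ex Enx]]]]]].
have [/nilP | Hne] := eqVneq (l' ++ r') [::].
  (* an empty cycle: cut it out of the tree and recurse *)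
  rewrite cat_nilp => /andP [/nilP El /nilP Er]; move: Ex; rewrite El Er cats0 => Ex.
  apply: (IHn (m + nx')); [lia | | by []].
  by rewrite Ew Ex; apply: HSC.
exists l, l', x', r', r; split=> //; first by rewrite Ew Ex -!catA.
apply/cfg_langE; exists (m + (m' + (m' + nx'))).
by have := HSC _ _ (HCC _ _ (HCC _ _ HC)); rewrite -!catA.
Qed.

Lemma gen_nest X t1 t t2 k : (X, [:: inr t1; inl X; inr t2]) \in rules G ->
  (X, [:: inr t]) \in rules G -> exists n, gen [:: inl X] (nseq k t1 ++ t :: nseq k t2) n.
Proof.
move=> Hrec Hbase; elim: k => [|k [n IH]].
  by exists 1; apply: gen_nonterm Hbase (gen_term t gen_nil) gen_nil.
rewrite [nseq k.+1 t2]nseqSr.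
have := gen_nonterm Hrec (gen_term t1 (gen_cat IH (gen_term t2 gen_nil))) gen_nil.
by rewrite cats0 -catA => Hk; exists (n + 0 + 0).+1.
Qed.

Fixpoint sem_form (I : nonterm G -> language T) (s : form) : language T :=
  match s with
  | [::] => fun w => w = [::]
  | inr t :: s' => fun w => exists2 w', w = t :: w' & sem_form I s' w'
  | inl A :: s' => fun w => exists w1 w2, [/\ w = w1 ++ w2, I A w1 & sem_form I s' w2]
  end.

Lemma gen_sound (I : nonterm G -> language T) :
  (forall A rhs w, (A, rhs) \in rules G -> sem_form I rhs w -> I A w) ->
  forall s w n, gen s w n -> sem_form I s w.
Proof.
move=> HI s w n; elim=> [|t s' w' n' _ IH|A rhs s' w1 w2 n1 n2 Hr _ IH1 _ IH2] //=.
- by exists w'.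
- by exists w1, w2; split=> //; apply: HI Hr IH1.
Qed.

End ParseTrees.

Arguments gen_nil {T G}.

Inductive letter := la | lb | lc | ld | lh | ls.

Definition nat_of_letter (t : letter) : nat :=
  match t with la => 0 | lb => 1 | lc => 2 | ld => 3 | lh => 4 | ls => 5 end.
Definition letter_of_nat (n : nat) : letter :=
  match n with 0 => la | 1 => lb | 2 => lc | 3 => ld | 4 => lh | _ => ls end.
Lemma nat_of_letterK : cancel nat_of_letter letter_of_nat. Proof. by case. Qed.
HB.instance Definition _ := Countable.copy letter (can_type nat_of_letterK).
Lemma letter_enumP : Finite.axiom [:: la; lb; lc; ld; lh; ls]. Proof. by case. Qed.
HB.instance Definition _ := isFinite.Build letter letter_enumP.

Inductive var := vS | vP | vQ.

Definition nat_of_var (X : var) : nat := match X with vS => 0 | vP => 1 | vQ => 2 end.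
Definition var_of_nat (n : nat) : var := match n with 0 => vS | 1 => vP | _ => vQ end.
Lemma nat_of_varK : cancel nat_of_var var_of_nat. Proof. by case. Qed.
HB.instance Definition _ := Countable.copy var (can_type nat_of_varK).
Lemma var_enumP : Finite.axiom [:: vS; vP; vQ]. Proof. by case. Qed.
HB.instance Definition _ := isFinite.Build var var_enumP.

(* S -> P d s | h Q s,  P -> a P b | h,  Q -> b Q c | d *)
Definition G0 : cfg letter := @CFG letter var vS
  [:: (vS, [:: inl vP; inr ld; inr ls]); (vS, [:: inr lh; inl vQ; inr ls]);
      (vP, [:: inr la; inl vP; inr lb]); (vP, [:: inr lh]);
      (vQ, [:: inr lb; inl vQ; inr lc]); (vQ, [:: inr ld])].

Definition L0 : language letter := cfg_lang G0.

Definition wA k := nseq k la ++ lh :: nseq k lb ++ [:: ld; ls].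
Definition wB k := lh :: nseq k lb ++ ld :: nseq k lc ++ [:: ls].
Definition wC k := nseq k la ++ lh :: nseq k lb ++ ld :: nseq k lc ++ [:: ls].

Definition sem_G0 (X : var) : language letter :=
  match X with
  | vS => fun w => (exists k, w = wA k) \/ (exists k, w = wB k)
  | vP => fun w => exists k, w = nseq k la ++ lh :: nseq k lb
  | vQ => fun w => exists k, w = nseq k lb ++ ld :: nseq k lc
  end.

Lemma G0_rules_sound X rhs w :
  (X, rhs) \in rules G0 -> @sem_form _ G0 sem_G0 rhs w -> sem_G0 X w.
Proof.
rewrite /= !inE.
case/predU1P => [[-> ->] /= [w1 [w2 [-> [k ->] [_ -> [_ -> ->]]]]] | ].
  by left; exists k; rewrite /wA -catA.
case/predU1P => [[-> ->] /= [_ -> [w1 [w2 [-> [k ->] [_ -> ->]]]]] | ].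
  by right; exists k; rewrite /wB -!catA.
case/predU1P => [[-> ->] /= [_ -> [w1 [w2 [-> [k ->] [_ -> ->]]]]] | ].
  by exists k.+1; rewrite [nseq k.+1 lb]nseqSr /= -!catA.
case/predU1P => [[-> ->] /= [_ -> ->] | ]; first by exists 0.
case/predU1P => [[-> ->] /= [_ -> [w1 [w2 [-> [k ->] [_ -> ->]]]]] | ].
  by exists k.+1; rewrite [nseq k.+1 lc]nseqSr /= -!catA.
by move=> /eqP [-> ->] /= [_ -> ->]; exists 0.
Qed.

Lemma L0_sound w : L0 w -> (exists k, w = wA k) \/ (exists k, w = wB k).
Proof.
move=> /cfg_langE [n /(gen_sound G0_rules_sound)] /= [w1 [w2 [-> Hw1 ->]]].
by rewrite cats0.
Qed.

Lemma L0_wA k : L0 (wA k).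
Proof.
have [n HP] := @gen_nest _ G0 vP la lh lb k isT isT.
apply/cfg_langE; exists (n + 0 + 0).+1.
have := gen_nonterm (isT : (vS, [:: inl vP; inr ld; inr ls]) \in rules G0)
  (gen_cat HP (gen_term ld (gen_term ls gen_nil))) gen_nil.
by rewrite cats0 -catA.
Qed.

Lemma L0_wB k : L0 (wB k).
Proof.
have [n HQ] := @gen_nest _ G0 vQ lb ld lc k isT isT.
apply/cfg_langE; exists (n + 0 + 0).+1.
have := gen_nonterm (isT : (vS, [:: inr lh; inl vQ; inr ls]) \in rules G0)
  (gen_term lh (gen_cat HQ (gen_term ls gen_nil))) gen_nil.
by rewrite cats0 /= -catA.
Qed.

Lemma wC_ogi_L0 k : ogi L0 L0 (wC k).
Proof.
exists (wA k), (wB k); split; [exact: L0_wA | exact: L0_wB |].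
exists (nseq k la), (lh :: nseq k lb ++ [:: ld]), (nseq k lc), [:: ls], [::].
by split=> //; rewrite /wA /wB /wC /= -!catA.
Qed.

Lemma lc_notin_wA n : lc \notin wA n.
Proof. by rewrite !(inE, mem_cat, mem_nseq) !andbF. Qed.

Lemma la_notin_wB n : la \notin wB n.
Proof. by rewrite !(inE, mem_cat, mem_nseq) !andbF. Qed.

Lemma ogi_word_wA_wB n m w : ogi_word (wA n) (wB m) w -> w = wC m.
Proof.
move=> [x1 [u [z [v [x2 [Ex Ey Hu Hv ->]]]]]].
case: u Hu Ex Ey => [//|t u] _; case/lastP: v Hv => [//|v t'] _ Ex Ey.
have /rcons_inj [[Et Ey'] Et'] :
    rcons (t :: u ++ z ++ v) t' = rcons (lh :: nseq m lb ++ ld :: nseq m lc) ls.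
  by move: Ey; rewrite /wB -!cats1 /= -!catA => ->.
subst t t'.
have [Ex1 Erest] : x1 = nseq n la /\ u ++ rcons v ls ++ x2 = nseq n lb ++ [:: ld; ls].
  by apply: (@cat_cons_marker _ lh); rewrite ?(inE, mem_cat, mem_nseq) ?andbF.
have [Euv Ex2] : u ++ v = nseq n lb ++ [:: ld] /\ x2 = [::].
  apply: (@cat_cons_marker _ ls); rewrite ?(inE, mem_cat, mem_nseq) ?andbF //.
  by rewrite -!catA -Erest -cats1 -!catA.
have Enm := @nseq_marker_eq _ lb lc ld _ _ _ _ _ isT isT Euv Ey'.
by rewrite Ex1 Ex2 cats0 Enm /= -!rcons_cat Ey' /wC -cats1 -!catA.
Qed.

Lemma ogi_word_wB_wA n m w : ogi_word (wB n) (wA m) w -> la \notin w.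
Proof.
move=> Hw; apply/negP => /(mem_ogi_word Hw); rewrite (negPf (la_notin_wB n)) /=.
move: Hw => [x1 [u [z [v [x2 [Ex Ey Hu _ _]]]]]].
case: m Ey => [|m] Ey; first by rewrite !(inE, mem_cat, mem_nseq).
case: u Hu Ex Ey => [//|t u] _ Ex [Et _] _; move: (la_notin_wB n).
by rewrite Ex Et !(inE, mem_cat) eqxx orbT.
Qed.

Lemma ogi_L0_inv w : ogi L0 L0 w -> la \in w -> lc \in w -> exists k, w = wC k.
Proof.
move=> [x [y [/L0_sound Hx /L0_sound Hy Hw]]] Ha Hc.
case: Hx Hy Hw => [[n ->] | [n ->]] [[m ->] | [m ->]] Hw.
- by have := mem_ogi_word Hw Hc; rewrite (negPf (lc_notin_wA n)) (negPf (lc_notin_wA m)).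
- by exists m; apply: ogi_word_wA_wB Hw.
- by rewrite (negPf (ogi_word_wB_wA Hw)) in Ha.
- by have := mem_ogi_word Hw Ha; rewrite (negPf (la_notin_wB n)) (negPf (la_notin_wB m)).
Qed.

Lemma infix_wC_constant s k :
  infix s (wC k) -> lh \notin s -> ld \notin s -> ls \notin s -> constant s.
Proof.
move=> Hs Hh Hd Hl; move: Hs; rewrite /wC.
case/(infix_cat_cons_notin Hh)/orP => [/infix_nseq_constant // |].
case/(infix_cat_cons_notin Hd)/orP => [/infix_nseq_constant // |].
case/(infix_cat_cons_notin Hl)/orP => [/infix_nseq_constant // |].
by rewrite infixs0 => /eqP ->.
Qed.

Lemma count_wC k t : count_mem t (wC k) = if t \in [:: la; lb; lc] then k else 1.
Proof. by case: t; rewrite /wC; do 3![rewrite !(count_cat, count_nseq) /=]; lia. Qed.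

(* Pumping [wC K] adds equally many [a], [b] and [c] and no marker, hence
   all three letters; but [v] and [y] each lie within a single block. *)
Lemma wC_pump K k u v x y z : wC K = u ++ v ++ x ++ y ++ z ->
  u ++ v ++ v ++ x ++ y ++ y ++ z = wC k -> v ++ y = [::].
Proof.
move=> EK Ek.
have Hcount t : count_mem t (wC k) = count_mem t (wC K) + count_mem t (v ++ y).
  by rewrite -Ek EK !count_cat; lia.
have Hmark t : t \notin [:: la; lb; lc] -> t \notin v ++ y.
  move=> Ht; apply/count_memPn; have := Hcount t; rewrite !count_wC (negPf Ht); lia.
have Habc t : t \in [:: la; lb; lc] -> count_mem t (v ++ y) = k - K.
  by move=> Ht; have := Hcount t; rewrite !count_wC Ht; lia.
apply/eqP; apply: contraT => Hne.
have Hin t : t \in [:: la; lb; lc] -> t \in v ++ y.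
  have [t0 Ht0] : exists t0, t0 \in v ++ y.
    by case: (v ++ y) Hne => [//|t0 s] _; exists t0; rewrite inE eqxx.
  have Habc0 : t0 \in [:: la; lb; lc] by apply: contraLR Ht0 => /Hmark.
  by move=> Ht; rewrite -has_pred1 has_count Habc // -(Habc _ Habc0) -has_count has_pred1.
have Hnomark : [/\ lh \notin v ++ y, ld \notin v ++ y & ls \notin v ++ y] by split; apply: Hmark.
move: Hnomark; rewrite !mem_cat !negb_or => -[/andP [Hhv Hhy] /andP [Hdv Hdy] /andP [Hsv Hsy]].
have /(constantP la) [p Ev] : constant v.
  by apply: (@infix_wC_constant _ K) => //; rewrite EK infix_infix.
have /(constantP la) [q Ey] : constant y.
  by apply: (@infix_wC_constant _ K) => //; rewrite EK; do 2 apply: infix_catl; rewrite infix_infix.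
have Hpq t : t \in [:: la; lb; lc] -> (t == p) || (t == q).
  move/Hin; rewrite Ev Ey mem_cat !mem_nseq.
  by case/orP => /andP [_ ->]; rewrite ?orbT.
by have := Hpq la isT; have := Hpq lb isT; have := Hpq lc isT; case: p {Ev Hpq}; case: q {Ey}.
Qed.

Theorem theorem5p1 :
  exists (T : finType) (L : language T), context_free L /\ ~ context_free (ogi L L).
Proof.
exists letter, L0; split; first by exists G0.
move=> [G HG].
set K := bound G ^ #|nonterm G|.
have HK : 0 < K by rewrite expn_gt0.
have [|u [v [x [y [z [EK Hvy /HG Hpump]]]]]] := cfg_lang_pump (iffLR (HG _) (wC_ogi_L0 K)).
  by rewrite -/K /wC size_cat size_nseq /= addnS ltnS leq_addr.
have [k Ek] : exists k, u ++ v ++ v ++ x ++ y ++ y ++ z = wC k.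
  by apply: (ogi_L0_inv Hpump); apply: mem_pump; rewrite -EK !(inE, mem_cat, mem_nseq) HK.
by move: Hvy; rewrite (wC_pump EK Ek).
Qed.
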